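(* Let $\mu_1<\mu_2$ and $\sigma>0$ be real numbers, put $\theta^*=\frac{\mu_1+\mu_2}{2}$ and $x=\frac{\mu_2-\mu_1}{2\sigma}>0$. For $\theta\in\mathbb{R}$ let $\Delta=\theta-\theta^*$, and let $\pi_+(\theta)=\frac{e^{\Delta(\mu_2-\mu_1)/\sigma^2}}{1+e^{\Delta(\mu_2-\mu_1)/\sigma^2}}$ and $\pi_-(\theta)=1-\pi_+(\theta)$. Let $Q_\theta$ be the law of $X$ where $P(Y=+1)=\pi_+(\theta)$, $P(Y=-1)=\pi_-(\theta)$, $X\mid Y=+1\sim\mathcal N(\mu_1,\sigma^2)$ and $X\mid Y=-1\sim\mathcal N(\mu_2,\sigma^2)$. (Thus $\theta$ is exactly the Bayes-optimal decision threshold $\theta^*+\frac{\sigma^2}{\mu_2-\mu_1}\log\frac{\pi_+(\theta)}{\pi_-(\theta)}$ for $Q_\theta$.) Define $$\hat\mu_L(\theta)=\mathbb E_{Q_\theta}[X\mid X<\theta],\qquad \hat\mu_R(\theta)=\mathbb E_{Q_\theta}[X\mid X>\theta],\qquad g(\theta)=\frac{\hat\mu_L(\theta)+\hat\mu_R(\theta)}{2}.$$ Then $g(\theta^* )=\theta^*$, $g$ is differentiable at $\theta^*$, and $$g'(\theta^* )=C(x):=\bigl(2\varphi(x)+2x\Phi(x)\bigr)\bigl(2\varphi(x)-2x\Phi(-x)\bigr)=4\Bigl(\varphi(x)^2+\varphi(x)\,x\,(2\Phi(x)-1)-x^2\Phi(x)(1-\Phi(x))\Bigr),$$ which satisfies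 $0<C(x)\le \frac{2}{\pi}<1$ for all $x\ge 0$, with maximum value $\frac{2}{\pi}$ attained at $x=0$. Consequently, for every $c\in(2/\pi,1)$ there is $\delta>0$ such that $|\theta-\theta^*|<\delta$ implies $|g(\theta)-\theta^*|\le c\,|\theta-\theta^*|$; i.e. the iteration $\hat\theta_{t+1}=g(\hat\theta_t)$ converges linearly to $\theta^*$ once $\hat\theta_t$ is sufficiently close to $\theta^*$, with asymptotic rate at most $2/\pi$.
   Context: $\Phi$ denotes the standard normal cumulative distribution function and $\varphi(u)=\frac{1}{\sqrt{2\pi}}e^{-u^2/2}$ its density. The map $g$ models one step of balanced sampling with pseudo-labels: given the current decision boundary $\hat\theta_t$ (which is biased by the label imbalance $\pi_+/\pi_-$ of the current sample), the data are split by $\hat\theta_t$ into two pseudo-classes, the mean of each pseudo-class is estimated, and the new boundary $\hat\theta_{t+1}$ is the midpoint of these two estimated means. The paper phrases the result as: if $|\hat\theta_T-\theta^*|\ll|\mu_2-\mu_1|$ and $|(\hat\theta_T-\theta^* )(\mu_2-\mu_1)|\ll\sigma^2$, then $|\hat\theta_{t+1}-\theta^*|\le C|\hat\theta_t-\theta^*|$ for $t\ge T$ with $C=2/\pi$, understood to first order in $\hat\theta_t-\theta^*$. *)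

From Stdlib Require Import Reals.
From Coquelicot Require Import Coquelicot.
Open Scope R_scope.

Definition phi (u : R) : R := / sqrt (2 * PI) * exp (- u ^ 2 / 2).
Definition Phi (x : R) : R := RInt_gen phi (Rbar_locally m_infty) (at_point x).

Definition npdf (m s u : R) : R := / s * phi ((u - m) / s).

Section Model.
Variables mu1 mu2 sigma : R.

Definition theta_star : R := (mu1 + mu2) / 2.

Definition pi_plus (theta : R) : R :=
  let a := (theta - theta_star) * (mu2 - mu1) / sigma ^ 2 in
  exp a / (1 + exp a).
Definition pi_minus (theta : R) : R := 1 - pi_plus theta.

Definition qdens (theta u : R) : R :=
  pi_plus theta * npdf mu1 sigma u + pi_minus theta * npdf mu2 sigma u.

Definition muL (theta : R) : R :=
  RInt_gen (fun u => u * qdens theta u) (Rbar_locally m_infty) (at_point theta)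
  / RInt_gen (qdens theta) (Rbar_locally m_infty) (at_point theta).

Definition muR (theta : R) : R :=
  RInt_gen (fun u => u * qdens theta u) (at_point theta) (Rbar_locally p_infty)
  / RInt_gen (qdens theta) (at_point theta) (Rbar_locally p_infty).

Definition g (theta : R) : R := (muL theta + muR theta) / 2.
End Model.

Definition Crate (x : R) : R :=
  (2 * phi x + 2 * x * Phi x) * (2 * phi x - 2 * x * Phi (- x)).

From Stdlib Require Import Reals Lra.
From Coquelicot Require Import Coquelicot.
Open Scope R_scope.

(* Write s = (theta - theta_star) / sigma.  The antiderivatives of the
   mixture density and of u times it are explicit in Phi and phi, so the two
   conditional means are explicit and g theta = theta_star + sigma h_x(s) for
   an elementary function h_x.  Symbolic differentiation at s = 0, using
   Phi (-x) = 1 - Phi x, gives h_x(0) = 0 and h_x'(0) = C(x) = 4 Psi(x) Psi(-x)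
   with Psi x = phi x + x Phi x.

   Phi (-x) = 1 - Phi x is the Gaussian integral, obtained by Feynman's trick:
   (int_0^x phi)^2 + 2 int_0^1 phi(x) phi(x t) / (1 + t^2) dt has derivative 0
   and equals 1/4 at x = 0, while the second term vanishes as x -> oo.

   For C <= 2/pi: phi Psi <= Phi^2 (Psi is log-concave), which follows by
   integrating twice from -oo; hence Phi / Psi decreases, so y |-> Psi(y) Psi(-y)
   decreases on [0, oo) from Psi(0)^2 = 1 / (2 pi).  The local contraction is
   then the definition of the derivative at a fixed point. *)

(* Coquelicot states many equalities at the carrier of one of its algebraic
   structures, where [ring] and [field] do not recognise [R]. *)
Ltac as_real_eq := match goal with |- @eq _ ?a ?b => change (@eq R a b) end.

Lemma mvt_increment (f df : R -> R) a b :
  (forall t, is_derive f t (df t)) -> a <= b ->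
  exists c, a <= c <= b /\ f b - f a = df c * (b - a).
Proof.
  intros Df Hab.
  destruct (MVT_gen f a b df) as [c [Hc E]].
  - intros t _; apply Df.
  - intros t _. apply continuity_pt_filterlim.
    exact (ex_derive_continuous f t (ex_intro _ _ (Df t))).
  - rewrite Rmin_left, Rmax_right in Hc by lra. now exists c.
Qed.

Lemma derive_const (f : R -> R) a b : (forall t, is_derive f t 0) -> f a = f b.
Proof.
  intros Df.
  destruct (Rle_or_lt a b) as [Hab | Hba].
  - destruct (mvt_increment f (fun _ => 0) a b Df Hab) as [c [_ E]]. lra.
  - destruct (mvt_increment f (fun _ => 0) b a Df (Rlt_le _ _ Hba)) as [c [_ E]]. lra.
Qed.

Lemma derive_nonpos_le (f df : R -> R) a b :
  (forall t, is_derive f t (df t)) -> (forall t, a <= t <= b -> df t <= 0) ->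
  a <= b -> f b <= f a.
Proof.
  intros Df Hneg Hab.
  destruct (mvt_increment f df a b Df Hab) as [c [Hc E]].
  assert (df c * (b - a) <= 0) by (apply Rmult_le_0_r; [apply Hneg | ]; lra).
  lra.
Qed.

Lemma derive_nonneg_lim_ge0 (f df : R -> R) :
  (forall t, is_derive f t (df t)) -> (forall t, 0 <= df t) ->
  is_lim f m_infty 0 -> forall x, 0 <= f x.
Proof.
  intros Df Hpos Hlim x.
  apply (is_lim_le_loc f (fun _ => f x) m_infty 0 (f x)); [ | exact Hlim | apply is_lim_const].
  exists x. intros t Ht.
  destruct (mvt_increment f df t x Df (Rlt_le _ _ Ht)) as [c [_ E]].
  assert (0 <= df c * (x - t)) by (apply Rmult_le_pos; [apply Hpos | lra]).
  lra.
Qed.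

Lemma derive_pos_lim_gt0 (f df : R -> R) :
  (forall t, is_derive f t (df t)) -> (forall t, 0 < df t) ->
  is_lim f m_infty 0 -> forall x, 0 < f x.
Proof.
  intros Df Hpos Hlim x.
  pose proof (derive_nonneg_lim_ge0 f df Df (fun t => Rlt_le _ _ (Hpos t)) Hlim (x - 1)).
  destruct (mvt_increment f df (x - 1) x Df ltac:(lra)) as [c [_ E]].
  assert (0 < df c * (x - (x - 1))) by (apply Rmult_lt_0_compat; [apply Hpos | lra]).
  lra.
Qed.

Lemma is_derive_scal_plus (F G : R -> R) a b u dF dG :
  is_derive F u dF -> is_derive G u dG ->
  is_derive (fun v => a * F v + b * G v) u (a * dF + b * dG).
Proof.
  intros HF HG.
  assert (DF : Derive (fun v => F v) u = dF) by now apply is_derive_unique.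
  assert (DG : Derive (fun v => G v) u = dG) by now apply is_derive_unique.
  auto_derive; [repeat split; eexists; eassumption | ].
  rewrite DF, DG. ring.
Qed.

Lemma is_lim_scal_plus (F G : R -> R) x a b (lF lG : R) :
  is_lim F x lF -> is_lim G x lG -> is_lim (fun v => a * F v + b * G v) x (a * lF + b * lG).
Proof.
  intros HF HG.
  apply is_lim_plus'; [exact (is_lim_scal_l _ a _ _ HF) | exact (is_lim_scal_l _ b _ _ HG)].
Qed.

Lemma is_lim_scal_minus (F G : R -> R) x a b (lF lG : R) :
  is_lim F x lF -> is_lim G x lG -> is_lim (fun v => a * F v - b * G v) x (a * lF - b * lG).
Proof.
  intros HF HG.
  apply is_lim_minus'; [exact (is_lim_scal_l _ a _ _ HF) | exact (is_lim_scal_l _ b _ _ HG)].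
Qed.

Lemma is_lim_p_infty_inv_bound (f : R -> R) l K :
  (forall z, 1 <= z -> Rabs (f z - l) <= K / z) -> is_lim f p_infty l.
Proof.
  intros Hb. apply filterlim_locally. intros eps.
  pose proof (cond_pos eps) as He.
  exists (Rmax 1 (Rabs K / eps)). intros z Hz.
  pose proof (Rle_lt_trans _ _ _ (Rmax_l 1 (Rabs K / eps)) Hz) as H1.
  pose proof (Rle_lt_trans _ _ _ (Rmax_r 1 (Rabs K / eps)) Hz) as H2.
  apply Rle_lt_trans with (K / z); [apply Hb; lra | ].
  apply Rle_lt_trans with (Rabs K / z).
  - apply Rmult_le_compat_r; [apply Rlt_le, Rinv_0_lt_compat; lra | apply RRle_abs].
  - apply Rmult_lt_reg_r with z; [lra | ].
    replace (Rabs K / z * z) with (Rabs K) by (field; lra).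
    apply Rmult_lt_reg_r with (/ eps); [apply Rinv_0_lt_compat; lra | ].
    replace (eps * z * / eps) with z by (field; lra). exact H2.
Qed.

Lemma is_lim_m_infty_reflect (f : R -> R) l :
  is_lim (fun z => f (- z)) p_infty l -> is_lim f m_infty l.
Proof.
  intros Hl.
  apply is_lim_ext with (fun z => f (- - z)); [intros; now rewrite Ropp_involutive | ].
  apply (is_lim_comp (fun z => f (- z)) Ropp m_infty l p_infty Hl).
  - exact (is_lim_opp (fun z => z) m_infty m_infty (is_lim_id m_infty)).
  - exists 0. intros; discriminate.
Qed.

Lemma is_lim_affine_comp (f : R -> R) (x : Rbar) (l : R) m s :
  0 < s -> x = p_infty \/ x = m_infty -> is_lim f x l ->
  is_lim (fun u => f ((u - m) / s)) x l.
Proof.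
  intros Hs Hx Hf. apply (is_lim_comp f (fun u => (u - m) / s) x l x Hf).
  - assert (Hsc : forall u, (u - m) / s * s = u - m) by (intros; field; lra).
    destruct Hx as [-> | ->]; intros P [M HM]; exists (M * s + m); intros u Hu; apply HM;
      apply Rmult_lt_reg_r with s; rewrite ?Hsc; lra.
  - destruct Hx as [-> | ->]; exists 0; intros; discriminate.
Qed.

Lemma pow_gauss_le k z : (k <= 2)%nat -> 1 <= z ->
  z ^ k * exp (- z ^ 2 / 2) <= 16 / z.
Proof.
  intros Hk Hz.
  pose proof (Rle_pow z k 2 Hz Hk) as Hpow.
  pose proof (exp_ineq1_le (z ^ 2 / 4)) as Hq.
  assert (Hsq : exp (z ^ 2 / 2) = exp (z ^ 2 / 4) * exp (z ^ 2 / 4))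
    by (rewrite <- exp_plus; f_equal; field).
  assert (Hgrow : z ^ 3 <= 16 * exp (z ^ 2 / 2)) by (rewrite Hsq; nra).
  replace (- z ^ 2 / 2) with (- (z ^ 2 / 2)) by field. rewrite exp_Ropp.
  pose proof (exp_pos (z ^ 2 / 2)).
  apply Rle_trans with (z ^ 2 * / exp (z ^ 2 / 2)).
  - apply Rmult_le_compat_r; [apply Rlt_le, Rinv_0_lt_compat | ]; lra.
  - apply Rmult_le_reg_r with (z * exp (z ^ 2 / 2)); [nra | ].
    replace (z ^ 2 * / exp (z ^ 2 / 2) * (z * exp (z ^ 2 / 2))) with (z ^ 3) by (field; lra).
    replace (16 / z * (z * exp (z ^ 2 / 2))) with (16 * exp (z ^ 2 / 2)) by (field; lra).
    exact Hgrow.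
Qed.

Lemma is_lim_p_infty_gauss_bound (f : R -> R) l k : (k <= 2)%nat ->
  (forall z, 1 <= z -> Rabs (f z - l) <= z ^ k * exp (- z ^ 2 / 2)) ->
  is_lim f p_infty l.
Proof.
  intros Hk Hb. apply is_lim_p_infty_inv_bound with 16.
  intros z Hz. eapply Rle_trans; [apply Hb, Hz | apply pow_gauss_le; assumption].
Qed.

Lemma is_lim_m_infty_gauss_bound (f : R -> R) l k : (k <= 2)%nat ->
  (forall z, z <= -1 -> Rabs (f z - l) <= (- z) ^ k * exp (- z ^ 2 / 2)) ->
  is_lim f m_infty l.
Proof.
  intros Hk Hb. apply is_lim_m_infty_reflect, (is_lim_p_infty_gauss_bound _ l k Hk).
  intros z Hz. replace (z ^ 2) with ((- z) ^ 2) by ring.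
  rewrite <- (Ropp_involutive z) at 2. apply Hb. lra.
Qed.

Lemma ex_RInt_of_continuous (f : R -> R) a b : (forall t, continuous f t) -> ex_RInt f a b.
Proof.
  intros Cf. apply (ex_RInt_continuous (V := R_CompleteNormedModule)). intros t _; apply Cf.
Qed.

Lemma RInt_mult_const (f : R -> R) c a b :
  ex_RInt f a b -> RInt (fun t => c * f t) a b = c * RInt f a b.
Proof. exact (RInt_scal f a b c). Qed.

Lemma filterlim_at_point (f : R -> R) x : filterlim f (at_point x) (locally (f x)).
Proof. intros P HP. exact (locally_singleton _ _ HP). Qed.

Lemma is_RInt_gen_antiderivative {Fa Fb} {FFa : Filter Fa} {FFb : Filter Fb}
    (F f : R -> R) la lb :
  (forall u, is_derive F u (f u)) -> (forall u, continuous f u) ->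
  filterlim F Fa (locally la) -> filterlim F Fb (locally lb) ->
  is_RInt_gen f Fa Fb (lb - la).
Proof.
  intros DF Cf La Lb.
  apply is_RInt_gen_ext with (Derive F).
  - apply filter_forall. intros ab y _. apply is_derive_unique, DF.
  - apply is_RInt_gen_Derive; [ | | exact La | exact Lb]; apply filter_forall; intros ab y _.
    + eexists; apply DF.
    + apply continuous_ext with f; [intros; symmetry; apply is_derive_unique, DF | apply Cf].
Qed.

Lemma contraction_of_derive (f : R -> R) t0 C c :
  f t0 = t0 -> is_derive f t0 C -> Rabs C < c ->
  exists delta, 0 < delta /\
    forall t, Rabs (t - t0) < delta -> Rabs (f t - t0) <= c * Rabs (t - t0).
Proof.
  intros Hfix Df Hc. apply is_derive_Reals in Df.
  destruct (Df (c - Rabs C) ltac:(lra)) as [d Hd].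
  exists d. split; [apply cond_pos | ]. intros t Ht.
  destruct (Req_dec t t0) as [-> | Hne].
  - rewrite Hfix, Rminus_diag, Rabs_R0. lra.
  - specialize (Hd (t - t0) ltac:(lra) Ht).
    replace (t0 + (t - t0)) with t in Hd by ring. rewrite Hfix in Hd.
    replace (f t - t0) with ((f t - t0) / (t - t0) * (t - t0)) by (field; lra).
    rewrite Rabs_mult. apply Rmult_le_compat_r; [apply Rabs_pos | ].
    pose proof (Rabs_triang_inv ((f t - t0) / (t - t0)) C). lra.
Qed.

Lemma exp_le_compat a b : a <= b -> exp a <= exp b.
Proof. intros [H | ->]; [apply Rlt_le, exp_increasing, H | apply Rle_refl]. Qed.

Lemma sqrt_2PI_pos : 0 < sqrt (2 * PI).
Proof. apply sqrt_lt_R0. pose proof PI_RGT_0. lra. Qed.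

Lemma phi_derive z : is_derive phi z (- z * phi z).
Proof.
  unfold phi. auto_derive; [easy | ].
  replace (- (z * (z * 1)) * / 2) with (- z ^ 2 / 2) by (unfold Rdiv; ring).
  field. apply Rgt_not_eq, sqrt_2PI_pos.
Qed.

Lemma phi_continuous z : continuous phi z.
Proof. exact (ex_derive_continuous phi z (ex_intro _ _ (phi_derive z))). Qed.

Lemma ex_RInt_phi a b : ex_RInt phi a b.
Proof. apply ex_RInt_of_continuous, phi_continuous. Qed.

Lemma phi_opp z : phi (- z) = phi z.
Proof. unfold phi. now replace ((- z) ^ 2) with (z ^ 2) by ring. Qed.

Lemma phi_pos z : 0 < phi z.
Proof. apply Rmult_lt_0_compat; [apply Rinv_0_lt_compat, sqrt_2PI_pos | apply exp_pos]. Qed.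

Lemma phi_mul a b : phi a * phi b = / (2 * PI) * exp (- (a ^ 2 + b ^ 2) / 2).
Proof.
  unfold phi. replace (- (a ^ 2 + b ^ 2) / 2) with (- a ^ 2 / 2 + - b ^ 2 / 2) by field.
  assert (H2PI : / (2 * PI) = / sqrt (2 * PI) * / sqrt (2 * PI)).
  { rewrite <- Rinv_mult, sqrt_sqrt; [easy | ]. pose proof PI_RGT_0. lra. }
  rewrite exp_plus, H2PI. ring.
Qed.

Lemma phi_le_gauss z : phi z <= exp (- z ^ 2 / 2).
Proof.
  assert (Hc : / sqrt (2 * PI) <= 1).
  { rewrite <- Rinv_1. apply Rinv_le_contravar; [lra | ].
    rewrite <- sqrt_1. apply sqrt_le_1_alt. pose proof PI2_3_2. lra. }
  pose proof (exp_pos (- z ^ 2 / 2)). unfold phi. nra.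
Qed.

Lemma phi_le_phi0 z : phi z <= phi 0.
Proof.
  unfold phi. apply Rmult_le_compat_l; [apply Rlt_le, Rinv_0_lt_compat, sqrt_2PI_pos | ].
  apply exp_le_compat. pose proof (pow2_ge_0 z). lra.
Qed.

Lemma Derive_phi z : Derive phi z = - z * phi z.
Proof. apply is_derive_unique, phi_derive. Qed.

Lemma ex_derive_phi z : ex_derive phi z.
Proof. eexists; apply phi_derive. Qed.

(** * The Gaussian integral *)

Lemma RInt_phi_derive z : is_derive (fun b => RInt phi 0 b) z (phi z).
Proof.
  apply is_derive_RInt with 0; [ | apply phi_continuous].
  apply filter_forall. intros b. apply (RInt_correct (V := R_CompleteNormedModule)), ex_RInt_phi.
Qed.

Lemma RInt_phi_scale x : RInt phi 0 x = RInt (fun t => x * phi (x * t)) 0 1.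
Proof.
  rewrite <- (Rmult_0_r x) at 1. rewrite <- (Rmult_1_r x) at 2.
  rewrite <- (Rplus_0_r (x * 0)), <- (Rplus_0_r (x * 1)), <- RInt_comp_lin by apply ex_RInt_phi.
  apply RInt_ext. intros t _. now rewrite Rplus_0_r.
Qed.

Definition gauss_defect (x : R) : R :=
  RInt (fun t => 2 * phi x * phi (x * t) / (1 + t ^ 2)) 0 1.

Lemma defect_integrand_continuous x t :
  continuous (fun t => 2 * phi x * phi (x * t) / (1 + t ^ 2)) t.
Proof.
  apply (ex_derive_continuous (fun t => 2 * phi x * phi (x * t) / (1 + t ^ 2))).
  assert (0 < 1 + t ^ 2) by nra. auto_derive. repeat split; auto using ex_derive_phi; lra.
Qed.

Lemma defect_integrand_derive x t :
  is_derive (fun u => 2 * phi u * phi (u * t) / (1 + t ^ 2)) x (-2 * x * phi x * phi (x * t)).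
Proof.
  assert (Ht : 0 < 1 + t ^ 2) by nra.
  auto_derive; [repeat split; auto using ex_derive_phi; lra | ].
  rewrite !Derive_phi. field. lra.
Qed.

Lemma defect_integrand_derive_continuous x t :
  continuity_2d_pt (fun u v => Derive (fun z => 2 * phi z * phi (z * v) / (1 + v ^ 2)) u) x t.
Proof.
  apply continuity_2d_pt_ext with (fun u v => -2 * u * phi u * phi (u * v)).
  { intros u v. symmetry. apply is_derive_unique, defect_integrand_derive. }
  assert (Cphi : forall z, continuity_pt phi z)
    by (intros z; apply continuity_pt_filterlim, phi_continuous).
  apply continuity_2d_pt_mult; [apply continuity_2d_pt_mult | ].
  - apply continuity_2d_pt_mult; [apply continuity_2d_pt_const | apply continuity_2d_pt_id1].
  - apply (continuity_1d_2d_pt_comp phi (fun u v => u)); [apply Cphi | apply continuity_2d_pt_id1].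
  - apply (continuity_1d_2d_pt_comp phi (fun u v => u * v)); [apply Cphi | ].
    apply continuity_2d_pt_mult; [apply continuity_2d_pt_id1 | apply continuity_2d_pt_id2].
Qed.

Lemma gauss_defect_derive x :
  is_derive gauss_defect x (RInt (fun t => -2 * x * phi x * phi (x * t)) 0 1).
Proof.
  replace (RInt (fun t => -2 * x * phi x * phi (x * t)) 0 1)
    with (RInt (fun t => Derive (fun u => 2 * phi u * phi (u * t) / (1 + t ^ 2)) x) 0 1).
  - apply (is_derive_RInt_param (fun u t => 2 * phi u * phi (u * t) / (1 + t ^ 2))).
    + apply filter_forall. intros y t _. eexists. apply defect_integrand_derive.
    + intros t _. apply defect_integrand_derive_continuous.
    + apply filter_forall. intros y. apply ex_RInt_of_continuous, defect_integrand_continuous.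
  - apply RInt_ext. intros t _. apply is_derive_unique, defect_integrand_derive.
Qed.

Lemma inv_1_plus_sq_continuous t : continuous (fun t => / (1 + t ^ 2)) t.
Proof.
  apply (ex_derive_continuous (fun t => / (1 + t ^ 2))).
  auto_derive. pose proof (pow2_ge_0 t). lra.
Qed.

Lemma RInt_inv_1_plus_sq : RInt (fun t => / (1 + t ^ 2)) 0 1 = PI / 4.
Proof.
  rewrite (is_RInt_unique _ 0 1 (atan 1 - atan 0)); [rewrite atan_1, atan_0; as_real_eq; ring | ].
  apply (is_RInt_derive atan).
  - intros t _. apply is_derive_Reals, derivable_pt_lim_atan.
  - intros t _. apply inv_1_plus_sq_continuous.
Qed.

Lemma gauss_defect_0 : gauss_defect 0 = 1 / 4.
Proof.
  unfold gauss_defect.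
  assert (Hphi0 : 2 * phi 0 * phi 0 = / PI).
  { rewrite Rmult_assoc, phi_mul. replace (- (0 ^ 2 + 0 ^ 2) / 2) with 0 by field.
    rewrite exp_0. field. pose proof PI_RGT_0. lra. }
  transitivity (RInt (fun t => / PI * / (1 + t ^ 2)) 0 1).
  - apply RInt_ext. intros t _. rewrite Rmult_0_l, <- Hphi0. as_real_eq.
    field. pose proof (pow2_ge_0 t). lra.
  - rewrite RInt_mult_const, RInt_inv_1_plus_sq.
    + field. pose proof PI_RGT_0. lra.
    + apply ex_RInt_of_continuous, inv_1_plus_sq_continuous.
Qed.

Lemma gauss_sum_derive x : is_derive (fun y => RInt phi 0 y ^ 2 + gauss_defect y) x 0.
Proof.
  set (k := fun t => x * phi (x * t)).
  assert (Hk : ex_RInt k 0 1).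
  { apply ex_RInt_of_continuous. intros t. apply (ex_derive_continuous k).
    unfold k. auto_derive. apply ex_derive_phi. }
  assert (Hzero : 2 * RInt phi 0 x * phi x + RInt (fun t => -2 * x * phi x * phi (x * t)) 0 1 = 0).
  { rewrite RInt_phi_scale.
    replace (RInt (fun t => -2 * x * phi x * phi (x * t)) 0 1)
      with (RInt (fun t => -2 * phi x * k t) 0 1)
      by (apply RInt_ext; intros t _; unfold k; as_real_eq; ring).
    rewrite (RInt_mult_const k (-2 * phi x)) by exact Hk. fold k. ring. }
  enough (H : is_derive (fun y => RInt phi 0 y ^ 2 + gauss_defect y) x
                (2 * RInt phi 0 x * phi x + RInt (fun t => -2 * x * phi x * phi (x * t)) 0 1))
    by (rewrite Hzero in H; exact H).
  assert (Hsq : is_derive (fun y => RInt phi 0 y ^ 2) x (2 * RInt phi 0 x * phi x)).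
  { apply is_derive_ext with (fun y => RInt phi 0 y * RInt phi 0 y); [intros; simpl; ring | ].
    replace (2 * RInt phi 0 x * phi x)
      with (plus (mult (phi x) (RInt phi 0 x)) (mult (RInt phi 0 x) (phi x)))
      by (unfold plus, mult; simpl; unfold mult; simpl; ring).
    apply (is_derive_mult (fun y => RInt phi 0 y) (fun y => RInt phi 0 y));
      [apply RInt_phi_derive | apply RInt_phi_derive | apply Rmult_comm]. }
  exact (is_derive_plus _ _ x _ _ Hsq (gauss_defect_derive x)).
Qed.

Lemma gauss_pythagoras x : RInt phi 0 x ^ 2 + gauss_defect x = 1 / 4.
Proof.
  rewrite (derive_const _ x 0 gauss_sum_derive), RInt_point, gauss_defect_0.
  unfold zero; simpl. ring.
Qed.

Lemma RInt_phi_opp z : RInt phi 0 (- z) = - RInt phi 0 z.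
Proof.
  rewrite <- (Rmult_0_r (-1)) at 1. replace (- z) with (-1 * z + 0) by ring.
  rewrite <- (Rplus_0_r (-1 * 0)), <- RInt_comp_lin by apply ex_RInt_phi.
  rewrite <- (RInt_opp phi) by apply ex_RInt_phi.
  apply RInt_ext. intros t _. rewrite Rplus_0_r.
  replace (-1 * t) with (- t) by ring. rewrite phi_opp.
  unfold scal, opp; simpl; unfold mult; simpl. ring.
Qed.

Lemma gauss_defect_bounds x : 0 <= gauss_defect x <= 2 * phi 0 * phi x.
Proof.
  assert (Hpos : forall t, 0 <= 2 * phi x * phi (x * t) / (1 + t ^ 2)).
  { intros t. pose proof (phi_pos x). pose proof (phi_pos (x * t)).
    apply Rdiv_le_0_compat; nra. }
  split.
  - apply RInt_ge_0; [lra | apply ex_RInt_of_continuous, defect_integrand_continuous | intros; apply Hpos].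
  - unfold gauss_defect. replace (2 * phi 0 * phi x) with (RInt (fun _ => 2 * phi 0 * phi x) 0 1)
      by (rewrite RInt_const; unfold scal; simpl; unfold mult; simpl; ring).
    apply RInt_le; [lra | apply ex_RInt_of_continuous, defect_integrand_continuous | apply ex_RInt_const | ].
    intros t _. pose proof (phi_pos x). pose proof (phi_pos (x * t)). pose proof (phi_le_phi0 (x * t)).
    assert (Ht : 1 <= 1 + t ^ 2) by nra.
    apply Rle_trans with (2 * phi x * phi (x * t)); [ | nra].
    unfold Rdiv. rewrite <- (Rmult_1_r (2 * phi x * phi (x * t))) at 2.
    apply Rmult_le_compat_l; [nra | ]. rewrite <- Rinv_1. apply Rinv_le_contravar; lra.
Qed.

Lemma RInt_phi_tail z : 0 <= z -> Rabs (RInt phi 0 z - / 2) <= exp (- z ^ 2 / 2).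
Proof.
  intros Hz.
  assert (HG : 0 <= RInt phi 0 z)
    by (apply RInt_ge_0; [exact Hz | apply ex_RInt_phi | intros; apply Rlt_le, phi_pos]).
  pose proof (gauss_pythagoras z) as Hpy. pose proof (gauss_defect_bounds z) as [HD0 HD1].
  assert (H2 : 2 * phi 0 * phi z * 2 <= exp (- z ^ 2 / 2)).
  { replace (2 * phi 0 * phi z * 2) with (4 * (phi 0 * phi z)) by ring.
    rewrite phi_mul. replace (- (0 ^ 2 + z ^ 2) / 2) with (- z ^ 2 / 2) by field.
    pose proof (exp_pos (- z ^ 2 / 2)). pose proof PI2_3_2.
    apply Rmult_le_reg_r with PI; [lra | ].
    replace (4 * (/ (2 * PI) * exp (- z ^ 2 / 2)) * PI) with (2 * exp (- z ^ 2 / 2)) by (field; lra).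
    nra. }
  assert (E : RInt phi 0 z - / 2 = - gauss_defect z / (RInt phi 0 z + / 2)) by (field_simplify_eq; lra).
  rewrite E, Rabs_div, Rabs_Ropp, !Rabs_right by lra.
  apply Rle_trans with (gauss_defect z * 2); [ | lra].
  apply Rmult_le_reg_r with (RInt phi 0 z + / 2); [lra | ].
  replace (gauss_defect z / (RInt phi 0 z + / 2) * (RInt phi 0 z + / 2)) with (gauss_defect z) by (field; lra).
  nra.
Qed.

Definition Phi_std (z : R) : R := / 2 + RInt phi 0 z.

Lemma Phi_std_derive z : is_derive Phi_std z (phi z).
Proof.
  unfold Phi_std. replace (phi z) with (0 + phi z) by ring.
  exact (is_derive_plus _ _ z _ _ (is_derive_const _ z) (RInt_phi_derive z)).
Qed.

Lemma Phi_std_opp z : Phi_std (- z) = 1 - Phi_std z.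
Proof. unfold Phi_std. rewrite RInt_phi_opp. field. Qed.

Lemma Phi_std_tail z : 0 <= z -> Rabs (Phi_std z - 1) <= exp (- z ^ 2 / 2).
Proof.
  intros Hz. unfold Phi_std. replace (/ 2 + RInt phi 0 z - 1) with (RInt phi 0 z - / 2) by field.
  now apply RInt_phi_tail.
Qed.

Lemma Phi_std_lim_p : is_lim Phi_std p_infty 1.
Proof.
  apply (is_lim_p_infty_gauss_bound _ _ 0); [auto | ].
  intros z Hz. rewrite pow_O, Rmult_1_l. apply Phi_std_tail. lra.
Qed.

Lemma Phi_std_left_tail z : z <= 0 -> Rabs (Phi_std z) <= exp (- z ^ 2 / 2).
Proof.
  intros Hz. replace (Phi_std z) with (- (Phi_std (- z) - 1)) by (rewrite Phi_std_opp; ring).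
  rewrite Rabs_Ropp. replace (z ^ 2) with ((- z) ^ 2) by ring. apply Phi_std_tail. lra.
Qed.

Lemma Phi_std_lim_m : is_lim Phi_std m_infty 0.
Proof.
  apply (is_lim_m_infty_gauss_bound _ _ 0); [auto | ].
  intros z Hz. rewrite pow_O, Rmult_1_l, Rminus_0_r. apply Phi_std_left_tail. lra.
Qed.

Lemma Phi_eq_Phi_std z : Phi z = Phi_std z.
Proof.
  unfold Phi. rewrite <- (Rminus_0_r (Phi_std z)).
  apply is_RInt_gen_unique.
  apply (is_RInt_gen_antiderivative Phi_std); [apply Phi_std_derive | apply phi_continuous | | ].
  - apply Phi_std_lim_m.
  - apply filterlim_at_point.
Qed.

Lemma Phi_derive z : is_derive Phi z (phi z).
Proof.
  apply is_derive_ext with Phi_std; [intros; symmetry; apply Phi_eq_Phi_std | apply Phi_std_derive].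
Qed.

Lemma Derive_Phi z : Derive Phi z = phi z.
Proof. apply is_derive_unique, Phi_derive. Qed.

Lemma ex_derive_Phi z : ex_derive Phi z.
Proof. eexists; apply Phi_derive. Qed.

Lemma Phi_opp z : Phi (- z) = 1 - Phi z.
Proof. rewrite !Phi_eq_Phi_std. apply Phi_std_opp. Qed.

Lemma Phi_left_tail z : z <= 0 -> Rabs (Phi z) <= exp (- z ^ 2 / 2).
Proof.
  rewrite Phi_eq_Phi_std. apply Phi_std_left_tail.
Qed.

Lemma is_lim_Phi_p : is_lim Phi p_infty 1.
Proof. apply is_lim_ext with Phi_std; [intros; symmetry; apply Phi_eq_Phi_std | apply Phi_std_lim_p]. Qed.

Lemma is_lim_Phi_m : is_lim Phi m_infty 0.
Proof. apply is_lim_ext with Phi_std; [intros; symmetry; apply Phi_eq_Phi_std | apply Phi_std_lim_m]. Qed.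

Lemma is_lim_phi_p : is_lim phi p_infty 0.
Proof.
  apply (is_lim_p_infty_gauss_bound _ _ 0); [auto | ]. intros z _.
  rewrite pow_O, Rmult_1_l, Rminus_0_r, Rabs_right by (apply Rle_ge, Rlt_le, phi_pos).
  apply phi_le_gauss.
Qed.

Lemma is_lim_pow_phi_m k : (k <= 2)%nat -> is_lim (fun z => z ^ k * phi z) m_infty 0.
Proof.
  intros Hk. apply (is_lim_m_infty_gauss_bound _ _ k Hk). intros z Hz.
  rewrite Rminus_0_r, Rabs_mult, <- RPow_abs, Rabs_left, Rabs_right
    by (try apply Rle_ge, Rlt_le, phi_pos; lra).
  apply Rmult_le_compat_l; [apply pow_le; lra | apply phi_le_gauss].
Qed.

Lemma is_lim_phi_m : is_lim phi m_infty 0.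
Proof.
  apply is_lim_ext with (fun z => z ^ 0 * phi z); [intros; simpl; ring | ].
  apply is_lim_pow_phi_m; repeat constructor.
Qed.

Lemma is_lim_pow_Phi_m k : (k <= 2)%nat -> is_lim (fun z => z ^ k * Phi z) m_infty 0.
Proof.
  intros Hk. apply (is_lim_m_infty_gauss_bound _ _ k Hk). intros z Hz.
  rewrite Rminus_0_r, Rabs_mult, <- RPow_abs, Rabs_left by lra.
  apply Rmult_le_compat_l; [apply pow_le; lra | apply Phi_left_tail; lra].
Qed.

Lemma Phi_pos z : 0 < Phi z.
Proof. exact (derive_pos_lim_gt0 Phi phi Phi_derive phi_pos is_lim_Phi_m z). Qed.

Lemma Phi_lt_1 z : Phi z < 1.
Proof. pose proof (Phi_pos (- z)). rewrite Phi_opp in H. lra. Qed.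

(** * The stop-loss transform and the bound on C *)

(* For Z standard normal, [Psi x = E (x - Z)_+] and [Psi2 x = E ((x - Z)_+ ^ 2)]. *)
Definition Psi (x : R) : R := phi x + x * Phi x.

Definition Psi2 (x : R) : R := (1 + x ^ 2) * Phi x + x * phi x.

Lemma Psi_derive x : is_derive Psi x (Phi x).
Proof.
  unfold Psi. auto_derive; [auto using ex_derive_phi, ex_derive_Phi | ].
  rewrite Derive_phi, Derive_Phi. ring.
Qed.

Lemma Derive_Psi x : Derive Psi x = Phi x.
Proof. apply is_derive_unique, Psi_derive. Qed.

Lemma Psi2_derive x : is_derive Psi2 x (2 * Psi x).
Proof.
  unfold Psi2, Psi. auto_derive; [auto using ex_derive_phi, ex_derive_Phi | ].
  rewrite Derive_phi, Derive_Phi. ring.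
Qed.

Lemma is_lim_Psi_m : is_lim Psi m_infty 0.
Proof.
  replace 0 with (0 + 0) by ring. apply is_lim_plus'.
  - exact is_lim_phi_m.
  - apply is_lim_ext with (fun z => z ^ 1 * Phi z); [intros; simpl; ring | ].
    apply is_lim_pow_Phi_m; repeat constructor.
Qed.

Lemma Psi_pos x : 0 < Psi x.
Proof. exact (derive_pos_lim_gt0 Psi Phi Psi_derive Phi_pos is_lim_Psi_m x). Qed.

Lemma is_lim_Psi2_m : is_lim Psi2 m_infty 0.
Proof.
  apply is_lim_ext with (fun z => (z ^ 0 * Phi z + z ^ 2 * Phi z) + z ^ 1 * phi z);
    [intros; unfold Psi2; simpl; ring | ].
  replace 0 with (0 + 0 + 0) by ring.
  apply is_lim_plus'; [apply is_lim_plus' | ];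
    [apply is_lim_pow_Phi_m | apply is_lim_pow_Phi_m | apply is_lim_pow_phi_m]; repeat constructor.
Qed.

Lemma Psi2_nonneg x : 0 <= Psi2 x.
Proof.
  apply (derive_nonneg_lim_ge0 Psi2 (fun t => 2 * Psi t) Psi2_derive); [ | exact is_lim_Psi2_m].
  intros t. pose proof (Psi_pos t). lra.
Qed.

Lemma phi_mul_Psi_le_Phi_sq x : phi x * Psi x <= Phi x ^ 2.
Proof.
  set (m := fun t => Phi t ^ 2 - phi t * Psi t).
  assert (Dm : forall t, is_derive m t (phi t * Psi2 t)).
  { intros t. unfold m, Psi, Psi2. auto_derive; [auto using ex_derive_phi, ex_derive_Phi | ].
    rewrite Derive_phi, Derive_Phi. ring. }
  assert (Lm : is_lim m m_infty 0).
  { apply is_lim_ext with (fun t => Phi t * Phi t - phi t * Psi t); [intros; unfold m; simpl; ring | ].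
    replace 0 with (0 * 0 - 0 * 0) by ring.
    apply is_lim_minus'; apply (is_lim_mult _ _ m_infty 0 0);
      auto using is_lim_Phi_m, is_lim_phi_m, is_lim_Psi_m; easy. }
  assert (Hm : 0 <= m x).
  { apply (derive_nonneg_lim_ge0 m _ Dm); [ | exact Lm].
    intros t. pose proof (phi_pos t). pose proof (Psi2_nonneg t). nra. }
  unfold m in Hm. lra.
Qed.

Lemma Phi_div_Psi_antitone a b : a <= b -> Phi b / Psi b <= Phi a / Psi a.
Proof.
  apply (derive_nonpos_le (fun t => Phi t / Psi t)
           (fun t => (phi t * Psi t - Phi t ^ 2) / Psi t ^ 2)).
  - intros t. pose proof (Psi_pos t). auto_derive.
    + repeat split; [apply ex_derive_Phi | eexists; apply Psi_derive | lra].
    + rewrite Derive_Phi, Derive_Psi. field. lra.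
  - intros t _. pose proof (Psi_pos t). pose proof (phi_mul_Psi_le_Phi_sq t).
    unfold Rdiv. apply Rmult_le_0_r; [lra | apply Rlt_le, Rinv_0_lt_compat; nra].
Qed.

Lemma Psi_0 : Psi 0 = phi 0.
Proof. unfold Psi. ring. Qed.

Lemma Psi_mul_Psi_opp_le y : 0 <= y -> Psi y * Psi (- y) <= phi 0 ^ 2.
Proof.
  intros Hy.
  replace (phi 0 ^ 2) with (Psi 0 * Psi (- 0)) by (rewrite Ropp_0, Psi_0; ring).
  apply (derive_nonpos_le (fun t => Psi t * Psi (- t))
           (fun t => Phi t * Psi (- t) - Psi t * Phi (- t)));
    [ | | exact Hy].
  - intros t. auto_derive; [repeat split; eexists; apply Psi_derive | ].
    rewrite !Derive_Psi. ring.
  - intros t [Ht _]. pose proof (Psi_pos t). pose proof (Psi_pos (- t)).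
    pose proof (Phi_div_Psi_antitone (- t) t ltac:(lra)) as Hk.
    apply (Rmult_le_compat_r (Psi t * Psi (- t))) in Hk; [ | nra].
    replace (Phi t / Psi t * (Psi t * Psi (- t))) with (Phi t * Psi (- t)) in Hk by (field; lra).
    replace (Phi (- t) / Psi (- t) * (Psi t * Psi (- t))) with (Psi t * Phi (- t)) in Hk by (field; lra).
    lra.
Qed.

Lemma Crate_Psi x : Crate x = 4 * (Psi x * Psi (- x)).
Proof. unfold Crate, Psi. rewrite phi_opp. ring. Qed.

Lemma Crate_0 : Crate 0 = 2 / PI.
Proof.
  rewrite Crate_Psi, Ropp_0, Psi_0, phi_mul.
  replace (- (0 ^ 2 + 0 ^ 2) / 2) with 0 by field. rewrite exp_0.
  field. pose proof PI_RGT_0. lra.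
Qed.

Lemma Crate_bounds y : 0 <= y -> 0 < Crate y <= 2 / PI.
Proof.
  intros Hy. rewrite <- Crate_0, !Crate_Psi.
  pose proof (Psi_pos y). pose proof (Psi_pos (- y)). pose proof (Psi_mul_Psi_opp_le y Hy).
  rewrite Ropp_0, Psi_0. nra.
Qed.

Lemma Crate_expand x :
  Crate x = 4 * (phi x ^ 2 + phi x * x * (2 * Phi x - 1) - x ^ 2 * Phi x * (1 - Phi x)).
Proof. unfold Crate. rewrite Phi_opp. ring. Qed.

Lemma two_div_PI_lt_1 : 2 / PI < 1.
Proof.
  pose proof PI2_3_2. apply Rmult_lt_reg_r with PI; [lra | ].
  unfold Rdiv. rewrite Rmult_assoc, Rinv_l; lra.
Qed.

(** * Conditional means of the two-component mixture *)

(* Distribution function and partial first moment [int_{-oo}^u v npdf m s v dv] of N(m, s^2). *)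
Definition ncdf (m s u : R) : R := Phi ((u - m) / s).

Definition npmean (m s u : R) : R := m * ncdf m s u - s * phi ((u - m) / s).

Lemma ncdf_derive m s u : s <> 0 -> is_derive (ncdf m s) u (npdf m s u).
Proof.
  intros Hs. unfold ncdf, npdf. auto_derive; [apply ex_derive_Phi | ].
  rewrite Derive_Phi. unfold Rminus, Rdiv. ring.
Qed.

Lemma npmean_derive m s u : s <> 0 -> is_derive (npmean m s) u (u * npdf m s u).
Proof.
  intros Hs. unfold npmean, ncdf, npdf.
  auto_derive; [auto using ex_derive_Phi, ex_derive_phi | ].
  rewrite Derive_Phi, Derive_phi. unfold Rminus, Rdiv. field. exact Hs.
Qed.

Lemma is_lim_ncdf_m m s : 0 < s -> is_lim (ncdf m s) m_infty 0.
Proof. intros Hs. apply (is_lim_affine_comp Phi); auto using is_lim_Phi_m. Qed.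

Lemma is_lim_ncdf_p m s : 0 < s -> is_lim (ncdf m s) p_infty 1.
Proof. intros Hs. apply (is_lim_affine_comp Phi); auto using is_lim_Phi_p. Qed.

Lemma is_lim_npmean_m m s : 0 < s -> is_lim (npmean m s) m_infty 0.
Proof.
  intros Hs. replace 0 with (m * 0 - s * 0) by ring.
  apply is_lim_scal_minus; [now apply is_lim_ncdf_m | ].
  apply (is_lim_affine_comp phi); auto using is_lim_phi_m.
Qed.

Lemma is_lim_npmean_p m s : 0 < s -> is_lim (npmean m s) p_infty m.
Proof.
  intros Hs. replace m with (m * 1 - s * 0) at 2 by ring.
  apply is_lim_scal_minus; [now apply is_lim_ncdf_p | ].
  apply (is_lim_affine_comp phi); auto using is_lim_phi_p.
Qed.

Section Mixture.
Variables mu1 mu2 sigma theta : R.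
Hypothesis Hsigma : 0 < sigma.

Definition mix_cdf (u : R) : R :=
  pi_plus mu1 mu2 sigma theta * ncdf mu1 sigma u + pi_minus mu1 mu2 sigma theta * ncdf mu2 sigma u.

Definition mix_pmean (u : R) : R :=
  pi_plus mu1 mu2 sigma theta * npmean mu1 sigma u + pi_minus mu1 mu2 sigma theta * npmean mu2 sigma u.

Definition mix_mean : R := pi_plus mu1 mu2 sigma theta * mu1 + pi_minus mu1 mu2 sigma theta * mu2.

Lemma qdens_continuous u : continuous (qdens mu1 mu2 sigma theta) u.
Proof.
  apply (ex_derive_continuous (qdens mu1 mu2 sigma theta)).
  unfold qdens, npdf. auto_derive. auto using ex_derive_phi.
Qed.

Lemma mix_cdf_derive u : is_derive mix_cdf u (qdens mu1 mu2 sigma theta u).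
Proof. apply is_derive_scal_plus; apply ncdf_derive; lra. Qed.

Lemma mix_pmean_derive u : is_derive mix_pmean u (u * qdens mu1 mu2 sigma theta u).
Proof.
  replace (u * qdens mu1 mu2 sigma theta u)
    with (pi_plus mu1 mu2 sigma theta * (u * npdf mu1 sigma u)
          + pi_minus mu1 mu2 sigma theta * (u * npdf mu2 sigma u)) by (unfold qdens; ring).
  apply is_derive_scal_plus; apply npmean_derive; lra.
Qed.

Lemma uqdens_continuous u : continuous (fun u => u * qdens mu1 mu2 sigma theta u) u.
Proof.
  apply (ex_derive_continuous (fun u => u * qdens mu1 mu2 sigma theta u)).
  unfold qdens, npdf. auto_derive. auto using ex_derive_phi.
Qed.

Lemma is_lim_mix_cdf_m : is_lim mix_cdf m_infty 0.
Proof.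
  replace 0 with (pi_plus mu1 mu2 sigma theta * 0 + pi_minus mu1 mu2 sigma theta * 0) by ring.
  apply is_lim_scal_plus; apply is_lim_ncdf_m; lra.
Qed.

Lemma is_lim_mix_cdf_p : is_lim mix_cdf p_infty 1.
Proof.
  replace 1 with (pi_plus mu1 mu2 sigma theta * 1 + pi_minus mu1 mu2 sigma theta * 1)
    by (unfold pi_minus; ring).
  apply is_lim_scal_plus; apply is_lim_ncdf_p; lra.
Qed.

Lemma is_lim_mix_pmean_m : is_lim mix_pmean m_infty 0.
Proof.
  replace 0 with (pi_plus mu1 mu2 sigma theta * 0 + pi_minus mu1 mu2 sigma theta * 0) by ring.
  apply is_lim_scal_plus; apply is_lim_npmean_m; lra.
Qed.

Lemma is_lim_mix_pmean_p : is_lim mix_pmean p_infty mix_mean.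
Proof. apply is_lim_scal_plus; apply is_lim_npmean_p; lra. Qed.

Lemma muL_eq : muL mu1 mu2 sigma theta = mix_pmean theta / mix_cdf theta.
Proof.
  unfold muL. rewrite <- (Rminus_0_r (mix_pmean theta)), <- (Rminus_0_r (mix_cdf theta)).
  f_equal; apply is_RInt_gen_unique.
  - apply (is_RInt_gen_antiderivative mix_pmean);
      [apply mix_pmean_derive | apply uqdens_continuous | apply is_lim_mix_pmean_m | apply filterlim_at_point].
  - apply (is_RInt_gen_antiderivative mix_cdf);
      [apply mix_cdf_derive | apply qdens_continuous | apply is_lim_mix_cdf_m | apply filterlim_at_point].
Qed.

Lemma muR_eq : muR mu1 mu2 sigma theta = (mix_mean - mix_pmean theta) / (1 - mix_cdf theta).
Proof.
  unfold muR. f_equal; [ | f_equal]; apply is_RInt_gen_unique.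
  - apply (is_RInt_gen_antiderivative mix_pmean);
      [apply mix_pmean_derive | apply uqdens_continuous | apply filterlim_at_point | apply is_lim_mix_pmean_p].
  - apply (is_RInt_gen_antiderivative mix_cdf);
      [apply mix_cdf_derive | apply qdens_continuous | apply filterlim_at_point | apply is_lim_mix_cdf_p].
Qed.
End Mixture.

(** * The map g in standardized coordinates *)

(* In the coordinate [s = (theta - theta_star) / sigma] the components become N(-x, 1)
   and N(x, 1), [std_weight x s] is [pi_plus theta], and [std_cdf], [std_pmean] are the
   mass and first moment of (-oo, s]. *)
Definition std_weight (x s : R) : R := exp (2 * x * s) / (1 + exp (2 * x * s)).

Definition std_cdf (x s : R) : R :=
  std_weight x s * Phi (s + x) + (1 - std_weight x s) * Phi (s - x).

Definition std_pmean (x s : R) : R :=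
  std_weight x s * (- x * Phi (s + x) - phi (s + x))
  + (1 - std_weight x s) * (x * Phi (s - x) - phi (s - x)).

Definition std_g (x s : R) : R :=
  (std_pmean x s / std_cdf x s
   + (x * (1 - 2 * std_weight x s) - std_pmean x s) / (1 - std_cdf x s)) / 2.

Lemma std_g_derive x : is_derive (std_g x) 0 (Crate x).
Proof.
  unfold std_g, std_pmean, std_cdf, std_weight.
  auto_derive.
  - rewrite ?Rmult_0_r, ?Rplus_0_l, ?exp_0, Phi_opp.
    repeat split; auto using ex_derive_Phi, ex_derive_phi; lra.
  - rewrite ?Rmult_0_r, ?Rplus_0_l, ?exp_0, !Derive_Phi, !Derive_phi, Crate_Psi.
    unfold Psi. rewrite !phi_opp, !Phi_opp. field. lra.
Qed.

Lemma std_g_0 x : std_g x 0 = 0.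
Proof.
  unfold std_g, std_pmean, std_cdf, std_weight.
  rewrite Rmult_0_r, exp_0, Rplus_0_l, Rminus_0_l, Phi_opp, phi_opp. field. lra.
Qed.

Lemma std_cdf_bounds x s : 0 < std_cdf x s < 1.
Proof.
  assert (Hw : 0 < std_weight x s < 1).
  { unfold std_weight. pose proof (exp_pos (2 * x * s)). split.
    - apply Rdiv_lt_0_compat; lra.
    - apply Rmult_lt_reg_r with (1 + exp (2 * x * s)); [lra | ]. field_simplify; lra. }
  unfold std_cdf.
  pose proof (Phi_pos (s + x)). pose proof (Phi_pos (s - x)).
  pose proof (Phi_lt_1 (s + x)). pose proof (Phi_lt_1 (s - x)). nra.
Qed.

Lemma g_standardize mu1 mu2 sigma theta : 0 < sigma ->
  g mu1 mu2 sigma theta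
  = theta_star mu1 mu2
    + sigma * std_g ((mu2 - mu1) / (2 * sigma)) ((theta - theta_star mu1 mu2) / sigma).
Proof.
  intros Hs. unfold g. rewrite muL_eq, muR_eq by exact Hs.
  unfold mix_pmean, mix_cdf, mix_mean, npmean, ncdf, pi_minus, pi_plus. cbv zeta.
  set (c := theta_star mu1 mu2). set (x := (mu2 - mu1) / (2 * sigma)).
  set (s := (theta - c) / sigma).
  assert (Hm1 : mu1 = c - sigma * x) by (unfold c, x, theta_star; field; lra).
  assert (Hm2 : mu2 = c + sigma * x) by (unfold c, x, theta_star; field; lra).
  assert (Hw : (theta - c) * (mu2 - mu1) / sigma ^ 2 = 2 * x * s) by (unfold s, x; field; lra).
  assert (H1 : (theta - mu1) / sigma = s + x) by (unfold s; rewrite Hm1; field; lra).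
  assert (H2 : (theta - mu2) / sigma = s - x) by (unfold s; rewrite Hm2; field; lra).
  rewrite Hw, H1, H2. fold (std_weight x s). clearbody c x s. subst mu1 mu2.
  pose proof (std_cdf_bounds x s) as Hb.
  unfold std_g, std_pmean. unfold std_cdf in *.
  field. lra.
Qed.

Lemma g_fixed_point mu1 mu2 sigma : 0 < sigma ->
  g mu1 mu2 sigma (theta_star mu1 mu2) = theta_star mu1 mu2.
Proof.
  intros Hs. rewrite g_standardize by exact Hs.
  replace ((theta_star mu1 mu2 - theta_star mu1 mu2) / sigma) with 0 by (field; lra).
  rewrite std_g_0. ring.
Qed.

Lemma g_derive mu1 mu2 sigma : 0 < sigma ->
  is_derive (g mu1 mu2 sigma) (theta_star mu1 mu2) (Crate ((mu2 - mu1) / (2 * sigma))).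
Proof.
  intros Hs. set (c := theta_star mu1 mu2). set (x := (mu2 - mu1) / (2 * sigma)).
  apply is_derive_ext with (fun t => c + sigma * std_g x ((t - c) / sigma));
    [intros t; symmetry; now apply g_standardize | ].
  pose proof (std_g_derive x) as D.
  assert (DD : Derive (fun s => std_g x s) 0 = Crate x) by now apply is_derive_unique.
  auto_derive; rewrite Rplus_opp_r, Rmult_0_l; [eexists; exact D | ].
  rewrite DD. field. lra.
Qed.

Theorem proposition1 (mu1 mu2 sigma : R) :
  mu1 < mu2 -> 0 < sigma ->
  let ts := theta_star mu1 mu2 in
  let x := (mu2 - mu1) / (2 * sigma) in
  g mu1 mu2 sigma ts = ts /\
  is_derive (g mu1 mu2 sigma) ts (Crate x) /\
  Crate x = 4 * (phi x ^ 2 + phi x * x * (2 * Phi x - 1)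
                 - x ^ 2 * Phi x * (1 - Phi x)) /\
  (forall y, 0 <= y -> 0 < Crate y <= 2 / PI) /\
  Crate 0 = 2 / PI /\ 2 / PI < 1 /\
  (forall c, 2 / PI < c < 1 ->
     exists delta, 0 < delta /\
       forall theta, Rabs (theta - ts) < delta ->
         Rabs (g mu1 mu2 sigma theta - ts) <= c * Rabs (theta - ts)).
Proof.
  intros H12 Hs ts x.
  assert (Hx : 0 <= x) by (apply Rmult_le_pos; [lra | apply Rlt_le, Rinv_0_lt_compat; lra]).
  pose proof (g_fixed_point mu1 mu2 sigma Hs) as Hfix.
  pose proof (g_derive mu1 mu2 sigma Hs) as Hder.
  split; [exact Hfix | ]. split; [exact Hder | ]. split; [apply Crate_expand | ].
  split; [exact Crate_bounds | ]. split; [exact Crate_0 | ]. split; [exact two_div_PI_lt_1 | ].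
  intros c Hc. apply (contraction_of_derive _ _ (Crate x)); [exact Hfix | exact Hder | ].
  destruct (Crate_bounds x Hx). rewrite Rabs_right; lra.
Qed.
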